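(* Let $S=\{0,1,2,\dots\}$, $\lambda,\mu>0$, $\theta=\lambda/\mu$, and let $X$ be the continuous-time Markov chain on $S$ with rates $q(i,i+1)=\lambda$; $q(i,i-k)=\mu$ for $i\ge1$, $1\le k\le i$; $q(i,i)=-(\lambda+i\mu)$; all other off-diagonal rates $0$. Let $\tau$ be a probability on $S$ with finite $m$-th moment for some integer $m\ge1$, $\mathbf P^{(\tau)}$ the law of $X$ with initial distribution $\tau$, $F^{(\tau)}_{X(t)}(x)=\mathbf P^{(\tau)}\{X(t)\le x\}$, $T(x)=\sum_{n\le x}\tau(n)$, $\Pi^*(x)=\sum_{n\le x}\pi^*(n)$ with $\pi^*(n)=\theta^n(n+1)/(\theta+1)_{n+1}$. Define $$h_m(x)=\sum_{\rho\ge0}\frac{e^{-\theta}\theta^\rho}{\rho!}(x+\rho)^{m-1}\ (x\ge0),\qquad \mathcal K_{h_m}(\tau,\pi^* )=\int_0^{\infty}h_m(x)|T(x)-\Pi^*(x)|\,dx.$$ Then for all $t\ge0$, $$\Big|\int_{\mathbb R}x^m\,d\big(F^{(\tau)}_{X(t)}(x)-\Pi^*(x)\big)\Big|\le m\,\mathcal K_{h_m}(\tau,\pi^* )\exp\{-\mu t-\theta(e^{-\mu t}+\mu t-1)\}.$$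
   Context: $(a)_n$ denotes the rising factorial $a(a+1)\cdots(a+n-1)$, $(a)_0=1$. *)

From Stdlib Require Import Reals.
From Coquelicot Require Import Coquelicot.
Open Scope R_scope.

Fixpoint rising (a : R) (n : nat) : R :=
  match n with
  | O => 1
  | S k => rising a k * (a + INR k)
  end.

Fixpoint sum_lt (f : nat -> R) (i : nat) : R :=
  match i with
  | O => 0
  | S k => sum_lt f k + f k
  end.

Definition pistar (theta : R) (n : nat) : R :=
  theta ^ n * INR (n + 1) / rising (theta + 1) (n + 1).

Definition cdf (f : nat -> R) (x : R) : R :=
  Series (fun n => if Rle_dec (INR n) x then f n else 0).

Definition h (m : nat) (theta : R) (x : R) : R :=
  Series (fun rho => exp (- theta) * theta ^ rho / INR (Factorial.fact rho)
                     * (x + INR rho) ^ (m - 1)).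

Definition is_prob (tau : nat -> R) : Prop :=
  (forall n, 0 <= tau n) /\ is_series tau 1.

(* Right-hand side of the Kolmogorov backward equation for the generator
   q(i,i+1) = lam, q(i,i-k) = mu (1 <= k <= i), q(i,i) = -(lam + i mu):
   sum_k q(i,k) p(k,j) = lam p(i+1,j) + mu sum_{l<i} p(l,j) - (lam+i mu) p(i,j) *)
Definition backward_rhs (lam mu : R) (p : nat -> nat -> R) (i j : nat) : R :=
  lam * p (S i) j + mu * sum_lt (fun l => p l j) i
  - (lam + INR i * mu) * p i j.

(* P is the transition function P(t)(i,j) = P{X(t)=j | X(0)=i} of the chain:
   a stochastic, right-continuous-at-0 solution of the backward equations
   with P(0) = I.  Since the chain is non-explosive, this solution is unique
   (it is the minimal Q-function). *)
Definition is_transition_fn (lam mu : R) (P : R -> nat -> nat -> R) : Prop :=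
  (forall t i j, 0 <= t -> 0 <= P t i j) /\
  (forall t i, 0 <= t -> is_series (fun j => P t i j) 1) /\
  (forall i j, P 0 i j = if Nat.eqb i j then 1 else 0) /\
  (forall i j, filterlim (fun s => P s i j) (at_right 0) (locally (P 0 i j))) /\
  (forall t i j, 0 < t ->
     is_derive (fun s => P s i j) t (backward_rhs lam mu (P t) i j)).

Definition law_at (tau : nat -> R) (P : R -> nat -> nat -> R) (t : R) (j : nat) : R :=
  Series (fun i => tau i * P t i j).

From Stdlib Require Import Reals Lra Lia Factorial Classical.
From Coquelicot Require Import Coquelicot.
Open Scope R_scope.

(* Write F_i(t, x) = P_i{X(t) <= x} and a(t) = theta (1 - e^{-mu t}).  By the backward
   equations the gaps F_i - F_{i+1} solve a triangular linear system of ODEs whose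
   bounded solution is unique (Picard iteration) and explicit:
     F_i(t, x) - F_{i+1}(t, x) = K_t(i, x) := e^{-(mu (i+1) + lam) t} a(t)^{x-i} / (x-i)!
   for i <= x, and 0 otherwise.
   Together with the tails 1 - Pi*(k) = theta^{k+1} / (theta+1)_{k+1}, which satisfy the
   matching recursion, this gives
     F^(tau)_t(x) - Pi*(x) = sum_{k <= x} K_t(k, x) (T(k) - Pi*(k)).
   Summation by parts turns the m-th moment into sum_x ((x+1)^m - x^m)(F^(tau)_t(x) - Pi*(x)).
   Since (x+1)^m - x^m is nondecreasing, Poisson(a(t)) weights can be replaced by
   Poisson(theta) weights at the cost of the factor e^{a(t) - theta}; and
   e^{-theta} sum_rho theta^rho/rho! ((k+rho+1)^m - (k+rho)^m) = m int_k^{k+1} h_m.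
   Collecting e^{-(lam + mu) t + a(t)} gives the stated rate. *)

(* Coquelicot states many equalities in a canonical-structure carrier that is only
   convertible to [R]; [ring] and [lra] need them at type [R]. *)
Ltac R_eq := match goal with |- ?a = ?b => change (@eq R a b) end.

Lemma sum_lt_ext f g n :
  (forall i, (i < n)%nat -> f i = g i) -> sum_lt f n = sum_lt g n.
Proof. induction n; simpl; intros H; auto. rewrite IHn, H; auto. Qed.

Lemma sum_lt_plus f g n :
  sum_lt (fun i => f i + g i) n = sum_lt f n + sum_lt g n.
Proof. induction n; simpl; [lra|]. rewrite IHn; lra. Qed.

Lemma sum_lt_minus f g n :
  sum_lt (fun i => f i - g i) n = sum_lt f n - sum_lt g n.
Proof. induction n; simpl; [lra|]. rewrite IHn; lra. Qed.

Lemma sum_lt_scal c f n : sum_lt (fun i => c * f i) n = c * sum_lt f n.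
Proof. induction n; simpl; [lra|]. rewrite IHn; lra. Qed.

Lemma sum_lt_const c n : sum_lt (fun _ => c) n = INR n * c.
Proof. induction n; simpl sum_lt; [simpl; lra|]. rewrite IHn, S_INR; lra. Qed.

Lemma sum_lt_le f g n :
  (forall i, (i < n)%nat -> f i <= g i) -> sum_lt f n <= sum_lt g n.
Proof.
  induction n; simpl; intros H; [lra|].
  pose proof (H n ltac:(lia)). pose proof (IHn ltac:(auto)). lra.
Qed.

Lemma sum_lt_nonneg f n : (forall i, (i < n)%nat -> 0 <= f i) -> 0 <= sum_lt f n.
Proof.
  intros H. apply Rle_trans with (sum_lt (fun _ => 0) n).
  - rewrite sum_lt_const; lra.
  - apply sum_lt_le; auto.
Qed.

Lemma sum_lt_abs f n : Rabs (sum_lt f n) <= sum_lt (fun i => Rabs (f i)) n.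
Proof.
  induction n; simpl; [rewrite Rabs_R0; lra|].
  eapply Rle_trans; [apply Rabs_triang | lra].
Qed.

Lemma sum_lt_add f p q :
  sum_lt f (p + q) = sum_lt f p + sum_lt (fun i => f (p + i)%nat) q.
Proof.
  induction q; simpl; [rewrite Nat.add_0_r; lra|].
  rewrite Nat.add_succ_r; simpl. rewrite IHq; lra.
Qed.

Lemma sum_lt_le_longer f n M : (n <= M)%nat -> (forall i, 0 <= f i) ->
  sum_lt f n <= sum_lt f M.
Proof.
  intros HnM Hf. replace M with (n + (M - n))%nat by lia. rewrite sum_lt_add.
  pose proof (sum_lt_nonneg (fun i => f (n + i)%nat) (M - n) (fun i _ => Hf _)). lra.
Qed.

Lemma sum_lt_eq0 f n :
  (forall i, (i < n)%nat -> f i = 0) -> sum_lt f n = 0.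
Proof. intros H. rewrite (sum_lt_ext f (fun _ => 0) n H), sum_lt_const; lra. Qed.

Lemma sum_lt_vanishing_tail f n M : (n <= M)%nat ->
  (forall i, (n <= i < M)%nat -> f i = 0) -> sum_lt f M = sum_lt f n.
Proof.
  intros HnM H. replace M with (n + (M - n))%nat by lia.
  rewrite sum_lt_add, (sum_lt_eq0 (fun i => f (n + i)%nat)); [lra|].
  intros i Hi; apply H; lia.
Qed.

Lemma sum_lt_swap (F : nat -> nat -> R) p q :
  sum_lt (fun i => sum_lt (fun j => F i j) q) p =
  sum_lt (fun j => sum_lt (fun i => F i j) p) q.
Proof.
  induction p; simpl.
  - symmetry; apply sum_lt_eq0; auto.
  - rewrite IHp, <- sum_lt_plus; auto.
Qed.

Lemma sum_lt_delta (g : nat -> R) i n :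
  sum_lt (fun k => if (k =? i)%nat then g k else 0) n =
  if (i <? n)%nat then g i else 0.
Proof.
  induction n; simpl; [destruct (Nat.ltb_spec i 0); auto; lia|].
  rewrite IHn. destruct (Nat.ltb_spec i n), (Nat.ltb_spec i (S n)), (Nat.eqb_spec n i);
    try lia; subst; ring.
Qed.

Lemma sum_lt_by_parts (f d : nat -> R) N :
  sum_lt (fun j => f j * d j) (S N) =
  f N * sum_lt d (S N) - sum_lt (fun x => (f (S x) - f x) * sum_lt d (S x)) N.
Proof.
  induction N; [simpl; ring|].
  change (sum_lt ?g (S (S N))) with (sum_lt g (S N) + g (S N)).
  change (sum_lt ?g (S N)) with (sum_lt g N + g N) at 3.
  rewrite IHN. simpl. ring.
Qed.

Lemma sum_n_sum_lt (a : nat -> R) N : sum_n a N = sum_lt a (S N).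
Proof.
  induction N; [rewrite sum_O; simpl; ring|].
  rewrite sum_Sn, IHN. reflexivity.
Qed.

Lemma is_series_sum_lt a l : is_series a l <-> is_lim_seq (fun N => sum_lt a N) l.
Proof.
  split; intros H.
  - apply is_lim_seq_incr_1, (is_lim_seq_ext (sum_n a)); [apply sum_n_sum_lt | exact H].
  - apply is_lim_seq_incr_1, (is_lim_seq_ext _ (sum_n a)) in H; [exact H|].
    intros; symmetry; apply sum_n_sum_lt.
Qed.

Lemma is_series_truncated f n :
  is_series (fun i => if (i <? n)%nat then f i else 0) (sum_lt f n).
Proof.
  apply is_series_sum_lt, is_lim_seq_ext_loc with (fun _ => sum_lt f n);
    [|apply is_lim_seq_const].
  exists n. intros N HN. rewrite (sum_lt_vanishing_tail _ n N HN).
  - apply sum_lt_ext. intros i Hi. destruct (Nat.ltb_spec i n); lia || auto.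
  - intros i Hi. destruct (Nat.ltb_spec i n); lia || auto.
Qed.

Lemma is_series_sum_lt_family (F : nat -> nat -> R) (l : nat -> R) n :
  (forall k, is_series (F k) (l k)) ->
  is_series (fun i => sum_lt (fun k => F k i) n) (sum_lt l n).
Proof.
  intros H. induction n; simpl.
  - apply is_series_sum_lt, (is_lim_seq_ext (fun _ => 0)); [|apply is_lim_seq_const].
    intros N; rewrite sum_lt_eq0; auto.
  - exact (is_series_plus _ _ _ _ IHn (H n)).
Qed.

Section NonnegSeries.
Variables (a : nat -> R) (l : R).
Hypothesis a_ge0 : forall k, 0 <= a k.
Hypothesis a_l : is_series a l.

Lemma sum_lt_le_series n : sum_lt a n <= l.
Proof.
  apply is_series_sum_lt in a_l.
  assert (H : Rbar_le (sum_lt a n) l); [|exact H].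
  apply is_lim_seq_le_loc with (fun _ => sum_lt a n) (fun N => sum_lt a N);
    [|apply is_lim_seq_const | exact a_l].
  exists n. intros N HN. apply sum_lt_le_longer; auto.
Qed.

Lemma series_ge0 : 0 <= l.
Proof. exact (sum_lt_le_series 0). Qed.

Lemma term_le_series n : a n <= l.
Proof.
  pose proof (sum_lt_le_series (S n)). simpl in *.
  pose proof (sum_lt_nonneg a n (fun i _ => a_ge0 i)). lra.
Qed.

End NonnegSeries.

Lemma series_le_of_sum_lt_le (a : nat -> R) l M :
  is_series a l -> (forall n, sum_lt a n <= M) -> l <= M.
Proof.
  intros H HM. apply is_series_sum_lt in H.
  assert (Hl : Rbar_le l M); [|exact Hl].
  apply is_lim_seq_le with (fun N => sum_lt a N) (fun _ => M); auto.
  apply is_lim_seq_const.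
Qed.

Lemma ex_series_le_nonneg (a b : nat -> R) :
  (forall n, 0 <= a n <= b n) -> ex_series b -> ex_series a.
Proof.
  intros H. apply (@ex_series_le R_AbsRing R_CompleteNormedModule).
  intros n. unfold norm; simpl; unfold abs; simpl.
  rewrite Rabs_pos_eq; apply H.
Qed.

Lemma is_derive_eq_r (f : R -> R) (t l l' : R) : is_derive f t l -> l = l' -> is_derive f t l'.
Proof. intros H <-; exact H. Qed.

Lemma is_derive_sum_lt (F dF : nat -> R -> R) n t :
  (forall k, is_derive (F k) t (dF k t)) ->
  is_derive (fun s => sum_lt (fun k => F k s) n) t (sum_lt (fun k => dF k t) n).
Proof.
  intros H. induction n; simpl.
  - apply (is_derive_const 0).
  - exact (is_derive_plus _ _ _ _ _ IHn (H n)).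
Qed.

Definition cont_at_right0 (F : R -> R) : Prop :=
  filterlim F (at_right 0) (locally (F 0)).

Lemma cont_at_right0_of_derive (F : R -> R) : ex_derive F 0 -> cont_at_right0 F.
Proof.
  intros H. eapply filterlim_filter_le_1; [apply filter_le_within|].
  exact (ex_derive_continuous F 0 H).
Qed.

Lemma cont_at_right0_plus F G :
  cont_at_right0 F -> cont_at_right0 G -> cont_at_right0 (fun r => F r + G r).
Proof.
  intros HF HG. exact (filterlim_comp_2 F G Rplus HF HG (filterlim_plus (F 0) (G 0))).
Qed.

Lemma cont_at_right0_scal c F : cont_at_right0 F -> cont_at_right0 (fun r => c * F r).
Proof.
  intros HF.
  exact (filterlim_comp_2 (fun _ => c) F Rmult (filterlim_const c) HF (filterlim_mult c (F 0))).
Qed.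

Lemma cont_at_right0_mult F G :
  cont_at_right0 F -> cont_at_right0 G -> cont_at_right0 (fun r => F r * G r).
Proof.
  intros HF HG. exact (filterlim_comp_2 F G Rmult HF HG (filterlim_mult (F 0) (G 0))).
Qed.

Lemma cont_at_right0_opp F : cont_at_right0 F -> cont_at_right0 (fun r => - F r).
Proof.
  intros HF. assert (H := cont_at_right0_scal (-1) F HF). unfold cont_at_right0 in *.
  replace (- F 0) with (-1 * F 0) by ring.
  eapply filterlim_ext; [|exact H]. intros r; simpl; ring.
Qed.

Lemma cont_at_right0_minus F G :
  cont_at_right0 F -> cont_at_right0 G -> cont_at_right0 (fun r => F r - G r).
Proof.
  intros HF HG. exact (cont_at_right0_plus F _ HF (cont_at_right0_opp G HG)).
Qed.

Lemma cont_at_right0_sum_lt (F : nat -> R -> R) n :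
  (forall k, cont_at_right0 (F k)) -> cont_at_right0 (fun r => sum_lt (fun k => F k r) n).
Proof.
  intros H. induction n; simpl.
  - apply filterlim_const.
  - exact (cont_at_right0_plus _ _ IHn (H n)).
Qed.

Lemma cont_at_right0_ball F : cont_at_right0 F ->
  forall eps, 0 < eps -> exists d, 0 < d /\ forall r, 0 < r < d -> Rabs (F r - F 0) < eps.
Proof.
  intros HF eps Heps.
  destruct (HF _ (locally_ball (F 0) (mkposreal eps Heps))) as [d Hd].
  exists d. split; [apply cond_pos|]. intros r Hr. apply (Hd r); [|lra].
  unfold ball; simpl; unfold AbsRing_ball, abs, minus, plus, opp; simpl.
  rewrite Ropp_0, Rplus_0_r, Rabs_pos_eq; lra.
Qed.

Lemma le_at0_of_derive_nonpos (F dF : R -> R) s : 0 < s ->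
  (forall r, 0 < r <= s -> is_derive F r (dF r)) ->
  (forall r, 0 < r <= s -> dF r <= 0) ->
  cont_at_right0 F -> F s <= F 0.
Proof.
  intros Hs HD Hneg HF. destruct (Rle_dec (F s) (F 0)) as [|Hgt]; auto. exfalso.
  destruct (cont_at_right0_ball F HF (F s - F 0)) as [d [Hd HFd]]; [lra|].
  set (r := Rmin (d / 2) (s / 2)).
  assert (Hr : 0 < r < d /\ r < s).
  { unfold r; repeat split;
      [apply Rmin_glb_lt | eapply Rle_lt_trans; [apply Rmin_l|]
      | eapply Rle_lt_trans; [apply Rmin_r|]]; lra. }
  specialize (HFd r ltac:(lra)). apply Rabs_def2 in HFd.
  destruct (MVT_gen F r s dF) as [c [Hc Hmvt]];
    rewrite ?Rmin_left, ?Rmax_right in * by lra.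
  - intros x Hx. apply HD; lra.
  - intros x Hx. apply continuity_pt_filterlim, (ex_derive_continuous F).
    eexists; apply HD; lra.
  - assert (dF c * (s - r) <= 0) by (apply Rmult_le_0_r; [apply Hneg|]; lra). lra.
Qed.

Lemma Rabs_sub_le_of_derive_le (F dF G dG : R -> R) s : 0 <= s ->
  (forall r, 0 < r <= s -> is_derive F r (dF r)) ->
  (forall r, 0 < r <= s -> is_derive G r (dG r)) ->
  (forall r, 0 < r <= s -> Rabs (dF r) <= dG r) ->
  cont_at_right0 F -> cont_at_right0 G ->
  Rabs (F s - F 0) <= G s - G 0.
Proof.
  intros Hs HF HG Hbound CF CG. destruct (Req_dec s 0) as [->|Hs0].
  { rewrite !Rminus_diag, Rabs_R0; lra. }
  assert (Hupper : F s - G s <= F 0 - G 0).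
  { apply (le_at0_of_derive_nonpos (fun r => F r - G r) (fun r => dF r - dG r)); try lra.
    - intros r Hr. exact (is_derive_minus _ _ _ _ _ (HF r Hr) (HG r Hr)).
    - intros r Hr. pose proof (Rle_abs (dF r)). pose proof (Hbound r Hr). lra.
    - exact (cont_at_right0_minus _ _ CF CG). }
  assert (Hlower : - F s - G s <= - F 0 - G 0).
  { apply (le_at0_of_derive_nonpos (fun r => - F r - G r) (fun r => - dF r - dG r)); try lra.
    - intros r Hr. exact (is_derive_minus _ _ _ _ _ (is_derive_opp _ _ _ (HF r Hr)) (HG r Hr)).
    - intros r Hr. pose proof (Rle_abs (- dF r)). rewrite Rabs_Ropp in H.
      pose proof (Hbound r Hr). lra.
    - exact (cont_at_right0_minus _ _ (cont_at_right0_opp F CF) CG). }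
  apply Rabs_le. lra.
Qed.

Definition exp_term (x : R) (n : nat) : R := x ^ n / INR (fact n).

Lemma INR_fact_pos n : 0 < INR (fact n).
Proof. apply lt_0_INR, lt_O_fact. Qed.

Lemma exp_term_ge0 x n : 0 <= x -> 0 <= exp_term x n.
Proof. intros Hx. apply Rdiv_le_0_compat; [apply pow_le; auto | apply INR_fact_pos]. Qed.

Lemma exp_term_le x y n : 0 <= x <= y -> exp_term x n <= exp_term y n.
Proof.
  intros Hxy. apply Rmult_le_compat_r; [left; apply Rinv_0_lt_compat, INR_fact_pos|].
  apply pow_incr; auto.
Qed.

Lemma exp_term_S x n : exp_term x (S n) = x / INR (S n) * exp_term x n.
Proof.
  unfold exp_term. rewrite fact_simpl, mult_INR. simpl pow.
  field. split; [apply not_0_INR, fact_neq_0 | apply not_0_INR; lia].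
Qed.

Lemma is_series_exp x : is_series (exp_term x) (exp x).
Proof.
  apply (is_series_ext (fun n => scal (pow_n x n) (/ INR (fact n)))); [|apply is_exp_Reals].
  intros n. unfold scal; simpl; unfold mult; simpl. rewrite pow_n_pow.
  unfold exp_term, Rdiv; ring.
Qed.

Lemma exp_term_le_exp x n : 0 <= x -> exp_term x n <= exp x.
Proof. intros Hx. exact (term_le_series _ _ (fun k => exp_term_ge0 x k Hx) (is_series_exp x) n). Qed.

Lemma pow_le_fact_mul_exp y m : 0 <= y -> y ^ m <= INR (fact m) * exp y.
Proof.
  intros Hy. pose proof (exp_term_le_exp y m Hy) as H. unfold exp_term in H.
  pose proof (INR_fact_pos m). apply Rle_div_l in H; lra.
Qed.

Lemma exp_add_INR c n : exp (c + INR n) = exp c * exp 1 ^ n.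
Proof.
  induction n; [simpl; rewrite Rplus_0_r; ring|].
  rewrite S_INR, <- Rplus_assoc, exp_plus, IHn. simpl. ring.
Qed.

Lemma ex_series_pow_exp_term c p x : 0 <= c -> 0 <= x ->
  ex_series (fun n => (c + INR n) ^ p * exp_term x n).
Proof.
  intros Hc Hx.
  apply ex_series_le_nonneg with (fun n => INR (fact p) * exp c * exp_term (exp 1 * x) n).
  - intros n. pose proof (pos_INR n). pose proof (exp_term_ge0 x n Hx). split.
    + apply Rmult_le_pos; auto; apply pow_le; lra.
    + unfold exp_term. rewrite Rpow_mult_distr.
      pose proof (pow_le_fact_mul_exp (c + INR n) p ltac:(lra)) as Hp.
      rewrite exp_add_INR in Hp.
      replace (INR (fact p) * exp c * (exp 1 ^ n * x ^ n / INR (fact n)))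
        with (INR (fact p) * (exp c * exp 1 ^ n) * exp_term x n) by (unfold exp_term, Rdiv; ring).
      apply Rmult_le_compat_r; auto.
  - apply (@ex_series_scal R_AbsRing R_CompleteNormedModule).
    eexists; apply is_series_exp.
Qed.

Lemma exp_term_add a b n :
  exp_term (a + b) n = sum_f_R0 (fun k => exp_term a k * exp_term b (n - k)) n.
Proof.
  unfold exp_term. rewrite binomial. unfold Rdiv at 1. rewrite Rmult_comm, scal_sum.
  apply sum_eq. intros i Hi. unfold Binomial.C.
  pose proof (INR_fact_pos n). pose proof (INR_fact_pos i). pose proof (INR_fact_pos (n - i)).
  field. lra.
Qed.

Section PoissonExpectation.
Variables (G : nat -> R) (a th : R).
Hypothesis a_th : 0 <= a <= th.
Hypothesis G_ge0 : forall n, 0 <= G n.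
Hypothesis G_mono : forall n, G n <= G (S n).
Hypothesis G_th : ex_series (fun n => G n * exp_term th n).

Lemma ex_series_poisson_le : ex_series (fun n => G n * exp_term a n).
Proof.
  apply ex_series_le_nonneg with (fun n => G n * exp_term th n); auto.
  intros n. split.
  - apply Rmult_le_pos; auto; apply exp_term_ge0; lra.
  - apply Rmult_le_compat_l; auto; apply exp_term_le; lra.
Qed.

(* Poisson(th) is Poisson(a) plus an independent Poisson(th - a): the Cauchy product. *)
Lemma poisson_expectation_mono :
  exp (- a) * Series (fun n => G n * exp_term a n)
  <= exp (- th) * Series (fun n => G n * exp_term th n).
Proof.
  set (b := th - a).
  assert (Hprod := is_series_mult_pos _ _ _ _ (Series_correct _ ex_series_poisson_le)
    (is_series_exp b) (fun n => Rmult_le_pos _ _ (G_ge0 n) (exp_term_ge0 a n ltac:(lra)))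
    (fun n => exp_term_ge0 b n ltac:(unfold b; lra))).
  apply is_series_unique in Hprod.
  assert (Hle : Series (fun n => sum_f_R0 (fun k => G k * exp_term a k * exp_term b (n - k)) n)
                <= Series (fun n => G n * exp_term th n)).
  { apply Series_le; auto. intros n. split.
    - apply cond_pos_sum. intros k.
      apply Rmult_le_pos; [apply Rmult_le_pos|]; auto; apply exp_term_ge0; unfold b; lra.
    - replace th with (a + b) by (unfold b; ring). rewrite exp_term_add, scal_sum.
      apply sum_Rle. intros k Hk. rewrite Rmult_assoc, (Rmult_comm _ (G n)).
      apply Rmult_le_compat_r.
      + apply Rmult_le_pos; apply exp_term_ge0; unfold b; lra.
      + clear - G_mono Hk. induction Hk; [lra|]. specialize (G_mono m). lra. }
  rewrite Hprod in Hle.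
  replace (exp (- th)) with (exp (- a) * exp (- b)) by (rewrite <- exp_plus; f_equal; unfold b; ring).
  assert (Hb : exp (- b) * exp b = 1) by (rewrite <- exp_plus, Rplus_opp_l, exp_0; auto).
  pose proof (exp_pos (- a)). pose proof (exp_pos (- b)).
  apply (Rmult_le_compat_l (exp (- a) * exp (- b))) in Hle; [|nra].
  replace (exp (- a) * exp (- b) * (Series (fun n => G n * exp_term a n) * exp b))
    with (exp (- a) * Series (fun n => G n * exp_term a n) * (exp (- b) * exp b)) in Hle by ring.
  rewrite Hb, Rmult_1_r in Hle. lra.
Qed.

End PoissonExpectation.

Lemma exp_le_mono a b : a <= b -> exp a <= exp b.
Proof. intros [H | ->]; [left; apply exp_increasing; auto | lra]. Qed.

Lemma is_derive_exp_term_S (f : R -> R) t df n : is_derive f t df ->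
  is_derive (fun r => exp_term (f r) (S n)) t (df * exp_term (f t) n).
Proof.
  intros Hf.
  assert (H := is_derive_scal _ _ (/ INR (fact (S n))) _ (is_derive_pow f (S n) t df Hf)).
  replace (df * exp_term (f t) n)
    with (/ INR (fact (S n)) * (INR (S n) * df * f t ^ pred (S n))).
  - eapply is_derive_ext; [|exact H]. intros r. unfold exp_term, Rdiv. apply Rmult_comm.
  - unfold exp_term. rewrite fact_simpl, mult_INR. simpl pred.
    pose proof (INR_fact_pos n). pose proof (lt_0_INR (S n) ltac:(lia)). field. lra.
Qed.

Section Kernel.
Variables lam mu : R.
Hypothesis lam_gt0 : 0 < lam.
Hypothesis mu_gt0 : 0 < mu.

Definition poisson_mean (t : R) : R := lam / mu * (1 - exp (- mu * t)).

Definition kernel (t : R) (i x : nat) : R :=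
  if (i <=? x)%nat
  then exp (- (mu * (INR i + 1) + lam) * t) * exp_term (poisson_mean t) (x - i)
  else 0.

Lemma poisson_mean_bounds t : 0 <= t -> 0 <= poisson_mean t <= lam / mu.
Proof.
  intros Ht. unfold poisson_mean. pose proof (Rdiv_lt_0_compat _ _ lam_gt0 mu_gt0).
  pose proof (exp_pos (- mu * t)).
  assert (exp (- mu * t) <= 1) by (rewrite <- exp_0; apply exp_le_mono; nra).
  split; nra.
Qed.

Lemma kernel_lt i x t : (x < i)%nat -> kernel t i x = 0.
Proof. intros H. unfold kernel. destruct (Nat.leb_spec i x); [lia | auto]. Qed.

Lemma kernel_at0 i x : kernel 0 i x = if (i =? x)%nat then 1 else 0.
Proof.
  unfold kernel, poisson_mean. rewrite !Rmult_0_r, exp_0, Rminus_diag, Rmult_0_r.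
  destruct (Nat.leb_spec i x), (Nat.eqb_spec i x); try lia.
  - subst. rewrite Nat.sub_diag. unfold exp_term; simpl; field.
  - replace (x - i)%nat with (S (x - i - 1)) by lia.
    unfold exp_term. rewrite pow_ne_zero by lia. unfold Rdiv; ring.
  - reflexivity.
Qed.

Lemma kernel_bounds t i x : 0 <= t -> 0 <= kernel t i x <= exp (lam / mu).
Proof.
  intros Ht. unfold kernel. destruct (Nat.leb_spec i x); [|split; [lra | left; apply exp_pos]].
  pose proof (poisson_mean_bounds t Ht) as Ha.
  pose proof (exp_pos (- (mu * (INR i + 1) + lam) * t)).
  pose proof (exp_term_ge0 _ (x - i) (proj1 Ha)).
  assert (exp (- (mu * (INR i + 1) + lam) * t) <= 1).
  { rewrite <- exp_0 at 2. apply exp_le_mono. pose proof (pos_INR i).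
    assert (0 <= (mu * (INR i + 1) + lam) * t) by (apply Rmult_le_pos; nra). lra. }
  assert (exp_term (poisson_mean t) (x - i) <= exp (lam / mu)).
  { eapply Rle_trans; [apply exp_term_le_exp; apply Ha | apply exp_le_mono; apply Ha]. }
  split; [apply Rmult_le_pos; lra|].
  rewrite <- (Rmult_1_l (exp (lam / mu))). apply Rmult_le_compat; lra.
Qed.

Lemma is_derive_kernel t i x :
  is_derive (fun s => kernel s i x) t
    (lam * kernel t (S i) x - (lam + mu * (INR i + 1)) * kernel t i x).
Proof.
  unfold kernel. set (c := mu * (INR i + 1) + lam).
  assert (HE : forall c, is_derive (fun s => exp (- c * s)) t (- c * exp (- c * t))).
  { intros c'. auto_derive; auto. ring. }
  destruct (Nat.leb_spec i x), (Nat.leb_spec (S i) x); try lia.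
  - replace (x - i)%nat with (S (x - S i)) by lia.
    assert (Ha : is_derive poisson_mean t (lam * exp (- mu * t))).
    { unfold poisson_mean. auto_derive; auto. field. lra. }
    eapply is_derive_eq_r;
      [exact (Derive.is_derive_mult _ _ _ _ _ (HE c) (is_derive_exp_term_S _ _ _ _ Ha))|].
    cbv beta. rewrite S_INR.
    replace (- (mu * (INR i + 1 + 1) + lam) * t) with (- c * t + - mu * t) by (unfold c; ring).
    rewrite exp_plus. unfold c; ring.
  - assert (x = i) by lia. subst x. rewrite Nat.sub_diag.
    unfold exp_term; simpl. auto_derive; auto. unfold c; ring.
  - auto_derive; auto. ring.
Qed.

End Kernel.

Section TriangularSystem.
Variables (lam C : R) (c : nat -> R) (e : nat -> R -> R).
Hypothesis lam_ge0 : 0 <= lam.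
Hypothesis c_ge0 : forall i, 0 <= c i.
Hypothesis e_at0 : forall i, e i 0 = 0.
Hypothesis e_cont : forall i, cont_at_right0 (e i).
Hypothesis e_derive :
  forall i r, 0 < r -> is_derive (e i) r (lam * e (S i) r - c i * e i r).
Hypothesis e_bounded : forall i r, 0 <= r -> Rabs (e i r) <= C.

(* Picard iteration: the integrating factor exp (c i * r) turns the i-th equation
   into (exp (c i * r) * e i r)' = exp (c i * r) * lam * e (S i) r. *)
Lemma triangular_system_bound n :
  forall i s, 0 <= s -> Rabs (e i s) <= C * exp_term (lam * s) n.
Proof.
  induction n as [|n IHn]; intros i s Hs.
  { unfold exp_term; simpl. rewrite Rdiv_1, Rmult_1_r. apply e_bounded; auto. }
  set (phi := fun r => exp (c i * r) * e i r).
  set (psi := fun r => exp (c i * s) * C * exp_term (lam * r) (S n)).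
  assert (Hexp : forall r, is_derive (fun r => exp (c i * r)) r (c i * exp (c i * r))).
  { intros r. auto_derive; auto. ring. }
  assert (Hlin : forall r, is_derive (fun r => lam * r) r lam).
  { intros r. auto_derive; auto. ring. }
  assert (Hcmp : Rabs (phi s - phi 0) <= psi s - psi 0).
  { apply (Rabs_sub_le_of_derive_le phi (fun r => exp (c i * r) * (lam * e (S i) r))
                                    psi (fun r => exp (c i * s) * C * (lam * exp_term (lam * r) n)));
      auto.
    - intros r Hr. eapply is_derive_eq_r;
        [exact (Derive.is_derive_mult _ _ _ _ _ (Hexp r) (e_derive i r ltac:(lra)))|].
      cbv beta; ring.
    - intros r Hr. exact (is_derive_scal _ _ _ _ (is_derive_exp_term_S _ _ _ n (Hlin r))).
    - intros r Hr. pose proof (exp_pos (c i * r)).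
      assert (exp (c i * r) <= exp (c i * s)) by (apply exp_le_mono, Rmult_le_compat_l; [apply c_ge0 | lra]).
      pose proof (IHn (S i) r ltac:(lra)).
      pose proof (Rabs_pos (e (S i) r)).
      rewrite Rabs_mult, Rabs_mult, (Rabs_pos_eq (exp _)), (Rabs_pos_eq lam) by lra.
      replace (exp (c i * s) * C * (lam * exp_term (lam * r) n))
        with (exp (c i * s) * (lam * (C * exp_term (lam * r) n))) by ring.
      apply Rmult_le_compat; try lra; [apply Rmult_le_pos; lra|].
      apply Rmult_le_compat_l; lra.
    - apply cont_at_right0_mult; [apply cont_at_right0_of_derive; eexists; apply Hexp | apply e_cont].
    - apply cont_at_right0_of_derive. eexists.
      exact (is_derive_scal _ _ _ _ (is_derive_exp_term_S _ _ _ n (Hlin 0))). }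
  unfold phi, psi in Hcmp.
  rewrite e_at0, Rmult_0_r, Rminus_0_r, Rabs_mult, Rabs_pos_eq in Hcmp by (left; apply exp_pos).
  replace (exp_term (lam * 0) (S n)) with 0 in Hcmp 
    by (rewrite Rmult_0_r; unfold exp_term; rewrite pow_i by lia; unfold Rdiv; ring).
  pose proof (exp_pos (c i * s)).
  apply Rmult_le_reg_l with (exp (c i * s)); auto. lra.
Qed.

Lemma triangular_system_zero i s : 0 <= s -> e i s = 0.
Proof.
  intros Hs. apply Rabs_eq_0, Rle_antisym; [|apply Rabs_pos].
  assert (H : Rbar_le (Rabs (e i s)) (Rbar_mult C 0)); [|simpl in H; lra].
  apply (is_lim_seq_le (fun _ => Rabs (e i s)) (fun n => C * exp_term (lam * s) n)).
  - intros n. apply triangular_system_bound; auto.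
  - apply is_lim_seq_const.
  - apply is_lim_seq_scal_l, ex_series_lim_0. eexists; apply is_series_exp.
Qed.

End TriangularSystem.

Lemma rising_pos th n : 0 <= th -> 0 < rising (th + 1) n.
Proof.
  intros Hth. induction n; simpl; [lra|].
  apply Rmult_lt_0_compat; auto. pose proof (pos_INR n); lra.
Qed.

Lemma fact_le_rising th n : 0 <= th -> INR (fact n) <= rising (th + 1) n.
Proof.
  intros Hth. induction n; [simpl; lra|].
  rewrite fact_simpl, mult_INR, S_INR. simpl rising. rewrite Rmult_comm.
  pose proof (pos_INR n). apply Rmult_le_compat; try lra. apply pos_INR.
Qed.

Lemma pistar_bounds th j : 0 <= th -> 0 <= pistar th j <= exp_term th j.
Proof.
  intros Hth. unfold pistar, exp_term. replace (j + 1)%nat with (S j) by lia.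
  pose proof (pow_le th j Hth). pose proof (lt_0_INR (S j) ltac:(lia)).
  pose proof (rising_pos th (S j) Hth).
  split; [apply Rdiv_le_0_compat; [apply Rmult_le_pos|]; lra|].
  apply Rle_trans with (th ^ j * INR (S j) / INR (fact (S j))).
  - apply Rmult_le_compat_l; [apply Rmult_le_pos; lra|].
    apply Rinv_le_contravar; [apply INR_fact_pos | apply fact_le_rising; auto].
  - right. rewrite fact_simpl, mult_INR. pose proof (INR_fact_pos j).
    field. split; lra.
Qed.

Definition pistar_tail (th : R) (k : nat) : R := th ^ S k / rising (th + 1) (S k).

Lemma sum_lt_pistar th k : 0 <= th -> sum_lt (pistar th) (S k) = 1 - pistar_tail th k.
Proof.
  intros Hth. induction k.
  - unfold pistar, pistar_tail; simpl. field. lra.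
  - change (sum_lt (pistar th) (S (S k))) with (sum_lt (pistar th) (S k) + pistar th (S k)).
    rewrite IHk. unfold pistar, pistar_tail. replace (S k + 1)%nat with (S (S k)) by lia.
    change (rising (th + 1) (S (S k))) with (rising (th + 1) (S k) * (th + 1 + INR (S k))).
    pose proof (rising_pos th (S k) Hth). pose proof (pos_INR (S k)).
    rewrite (S_INR (S k)). simpl pow.
    set (r := rising (th + 1) (S k)) in *. set (n := INR (S k)) in *.
    field. split; lra.
Qed.

Lemma pistar_tail_bounds th k : 0 <= th -> 0 <= pistar_tail th k <= th * exp_term th k.
Proof.
  intros Hth. unfold pistar_tail. pose proof (rising_pos th (S k) Hth).
  pose proof (pow_le th (S k) Hth). split; [apply Rdiv_le_0_compat; lra|].
  apply Rle_trans with (exp_term th (S k)).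
  - apply Rmult_le_compat_l; auto.
    apply Rinv_le_contravar; [apply INR_fact_pos | apply fact_le_rising; auto].
  - rewrite exp_term_S. pose proof (exp_term_ge0 th k Hth).
    assert (1 <= INR (S k)) by (apply (le_INR 1); lia).
    unfold Rdiv. apply Rmult_le_compat_r; auto.
    rewrite <- (Rmult_1_r th) at 2. apply Rmult_le_compat_l; auto.
    rewrite <- Rinv_1. apply Rinv_le_contravar; lra.
Qed.

Section StationaryTail.
Variables lam mu : R.
Hypothesis lam_gt0 : 0 < lam.
Hypothesis mu_gt0 : 0 < mu.

Lemma pistar_tail_0 : (lam + mu * (INR 0 + 1)) * pistar_tail (lam / mu) 0 = lam.
Proof. unfold pistar_tail; simpl. field. lra. Qed.

Lemma pistar_tail_S k :
  lam * pistar_tail (lam / mu) k = (lam + mu * (INR (S k) + 1)) * pistar_tail (lam / mu) (S k).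
Proof.
  unfold pistar_tail. set (th := lam / mu).
  assert (Hth : 0 < th) by (apply Rdiv_lt_0_compat; auto).
  change (rising (th + 1) (S (S k))) with (rising (th + 1) (S k) * (th + 1 + INR (S k))).
  pose proof (rising_pos th (S k) (Rlt_le _ _ Hth)). pose proof (pos_INR (S k)).
  replace lam with (th * mu) by (unfold th; field; lra).
  simpl pow. set (r := rising (th + 1) (S k)) in *. set (n := INR (S k)) in *.
  field. repeat split; lra.
Qed.

End StationaryTail.

Lemma sum_lt_telescoping lam (c u K : nat -> R) n :
  (forall k, lam * u k = c (S k) * u (S k)) -> c 0%nat * u 0%nat = lam ->
  sum_lt (fun k => u k * (lam * K (S k) - c k * K k)) (S n) =
  lam * u n * K (S n) - lam * K 0%nat.
Proof.
  intros Hu H0. induction n; [simpl; rewrite <- H0; ring|].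
  change (sum_lt ?f (S (S n))) with (sum_lt f (S n) + f (S n)).
  rewrite IHn, (Hu n). ring.
Qed.

Section TransitionFunction.
Variables (lam mu : R) (P : R -> nat -> nat -> R).
Hypothesis lam_gt0 : 0 < lam.
Hypothesis mu_gt0 : 0 < mu.
Hypothesis P_tf : is_transition_fn lam mu P.

Definition row_cdf (t : R) (i x : nat) : R := sum_lt (fun j => P t i j) (S x).

Lemma P_bounds t i j : 0 <= t -> 0 <= P t i j <= 1.
Proof.
  intros Ht. destruct P_tf as [P_ge0 [P_sum _]]. split; auto.
  exact (term_le_series _ _ (fun j => P_ge0 t i j Ht) (P_sum t i Ht) j).
Qed.

Lemma row_cdf_bounds t i x : 0 <= t -> 0 <= row_cdf t i x <= 1.
Proof.
  intros Ht. destruct P_tf as [P_ge0 [P_sum _]]. split.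
  - apply sum_lt_nonneg; auto.
  - exact (sum_lt_le_series _ _ (fun j => P_ge0 t i j Ht) (P_sum t i Ht) _).
Qed.

Lemma row_cdf_at0 i x : row_cdf 0 i x = if (i <=? x)%nat then 1 else 0.
Proof.
  destruct P_tf as [_ [_ [P_at0 _]]]. unfold row_cdf.
  rewrite (sum_lt_ext _ (fun j => if (j =? i)%nat then 1 else 0)), sum_lt_delta.
  - destruct (Nat.ltb_spec i (S x)), (Nat.leb_spec i x); auto; lia.
  - intros j _. rewrite P_at0, Nat.eqb_sym. reflexivity.
Qed.

Lemma row_cdf_cont i x : cont_at_right0 (fun s => row_cdf s i x).
Proof.
  destruct P_tf as [_ [_ [_ [P_cont _]]]].
  apply (cont_at_right0_sum_lt (fun j s => P s i j)). intros j; apply P_cont.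
Qed.

Lemma is_derive_row_cdf t i x : 0 < t ->
  is_derive (fun s => row_cdf s i x) t
    (lam * row_cdf t (S i) x + mu * sum_lt (fun l => row_cdf t l x) i
     - (lam + INR i * mu) * row_cdf t i x).
Proof.
  intros Ht. destruct P_tf as [_ [_ [_ [_ P_derive]]]]. unfold row_cdf.
  eapply is_derive_eq_r.
  - apply (is_derive_sum_lt (fun j s => P s i j) (fun j s => backward_rhs lam mu (P s) i j)).
    intros; apply P_derive; auto.
  - unfold backward_rhs. rewrite sum_lt_minus, sum_lt_plus, !sum_lt_scal.
    rewrite (sum_lt_swap (fun l j => P t l j)). reflexivity.
Qed.

(* The gaps between consecutive rows solve a triangular system with bounded
   solutions; the kernel solves it too, with the same initial values. *)
Lemma row_cdf_gap t i x : 0 <= t ->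
  row_cdf t i x - row_cdf t (S i) x = kernel lam mu t i x.
Proof.
  intros Ht. apply Rminus_diag_uniq.
  apply (triangular_system_zero lam (1 + exp (lam / mu)) (fun i => lam + mu * (INR i + 1))
           (fun i s => row_cdf s i x - row_cdf s (S i) x - kernel lam mu s i x)); auto; try lra.
  - intros k. pose proof (pos_INR k). nra.
  - intros k. rewrite !row_cdf_at0, kernel_at0.
    destruct (Nat.leb_spec k x), (Nat.leb_spec (S k) x), (Nat.eqb_spec k x); try lia; ring.
  - intros k. apply cont_at_right0_minus; [apply cont_at_right0_minus; apply row_cdf_cont|].
    apply cont_at_right0_of_derive. eexists; apply is_derive_kernel; auto.
  - intros k r Hr. eapply is_derive_eq_r.
    + exact (is_derive_minus _ _ _ _ _
        (is_derive_minus _ _ _ _ _ (is_derive_row_cdf r k x Hr) (is_derive_row_cdf r (S k) x Hr))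
        (is_derive_kernel lam mu mu_gt0 r k x)).
    + change (sum_lt ?f (S k)) with (sum_lt f k + f k). rewrite S_INR.
      unfold minus, plus, opp; simpl. ring.
  - intros k r Hr. pose proof (row_cdf_bounds r k x Hr). pose proof (row_cdf_bounds r (S k) x Hr).
    pose proof (kernel_bounds lam mu lam_gt0 mu_gt0 r k x Hr). apply Rabs_le. lra.
Qed.

Lemma row_cdf_eq t i x : 0 <= t ->
  row_cdf t i x = row_cdf t 0 x - sum_lt (fun k => kernel lam mu t k x) i.
Proof.
  intros Ht. induction i; [simpl; ring|].
  pose proof (row_cdf_gap t i x Ht). simpl. lra.
Qed.

Lemma row_cdf_0_eq t x : 0 <= t ->
  row_cdf t 0 x = 1 - pistar_tail (lam / mu) x
                  + sum_lt (fun k => pistar_tail (lam / mu) k * kernel lam mu t k x) (S x).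
Proof.
  intros Ht.
  set (G := fun s => row_cdf s 0 x
          - sum_lt (fun k => pistar_tail (lam / mu) k * kernel lam mu s k x) (S x)).
  assert (HG : Rabs (G t - G 0) <= 0 - 0).
  { apply (Rabs_sub_le_of_derive_le G (fun _ => 0) (fun _ => 0) (fun _ => 0)); auto.
    - intros r Hr. eapply is_derive_eq_r.
      + exact (is_derive_minus _ _ _ _ _ (is_derive_row_cdf r 0 x ltac:(lra))
          (is_derive_sum_lt _ (fun k s => pistar_tail (lam / mu) k *
             (lam * kernel lam mu s (S k) x - (lam + mu * (INR k + 1)) * kernel lam mu s k x))
             (S x) r (fun k => is_derive_scal _ _ _ _ (is_derive_kernel lam mu mu_gt0 r k x)))).
      + cbv beta.
        rewrite (sum_lt_telescoping lam (fun k => lam + mu * (INR k + 1)) _ (fun k => kernel lam mu r k x)).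
        * rewrite kernel_lt by lia. simpl sum_lt.
          pose proof (row_cdf_gap r 0 x ltac:(lra)).
          unfold minus, plus, opp; simpl. rewrite Rmult_0_l, Rplus_0_r. rewrite <- H. ring.
        * apply pistar_tail_S; auto.
        * apply pistar_tail_0; auto.
    - intros r Hr. exact (is_derive_const 0 r).
    - intros r Hr. rewrite Rabs_R0; lra.
    - apply cont_at_right0_minus; [apply row_cdf_cont|].
      apply (cont_at_right0_sum_lt (fun k s => pistar_tail (lam / mu) k * kernel lam mu s k x)).
      intros k. apply cont_at_right0_scal, cont_at_right0_of_derive.
      eexists; apply is_derive_kernel; auto.
    - apply filterlim_const. }
  assert (HG0 : G 0 = 1 - pistar_tail (lam / mu) x).
  { unfold G. rewrite row_cdf_at0.
    rewrite (sum_lt_ext _ (fun k => if (k =? x)%nat then pistar_tail (lam / mu) k else 0)).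
    - rewrite sum_lt_delta. destruct (Nat.ltb_spec x (S x)); [|lia]. simpl. ring.
    - intros k _. rewrite kernel_at0. destruct (Nat.eqb_spec k x); ring. }
  rewrite HG0, Rminus_diag, Rabs_le_between in HG. unfold G in HG. lra.
Qed.

End TransitionFunction.

Lemma sum_lt_truncate f i n : (forall k, (n <= k)%nat -> f k = 0) ->
  sum_lt f i = sum_lt (fun k => if (k <? i)%nat then f k else 0) n.
Proof.
  intros Hf. destruct (Nat.le_gt_cases i n) as [Hin|Hni].
  - replace n with (i + (n - i))%nat by lia. rewrite sum_lt_add, (sum_lt_eq0 _ (n - i)).
    + rewrite Rplus_0_r. apply sum_lt_ext. intros k Hk. destruct (Nat.ltb_spec k i); lia || auto.
    + intros k _. destruct (Nat.ltb_spec (i + k) i); lia || auto.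
  - rewrite (sum_lt_vanishing_tail f n i) by (auto with arith || (intros; apply Hf; lia)).
    apply sum_lt_ext. intros k Hk. destruct (Nat.ltb_spec k i); lia || auto.
Qed.

Section InitialLaw.
Variables (lam mu : R) (P : R -> nat -> nat -> R) (tau : nat -> R).
Hypothesis lam_gt0 : 0 < lam.
Hypothesis mu_gt0 : 0 < mu.
Hypothesis P_tf : is_transition_fn lam mu P.
Hypothesis tau_prob : is_prob tau.

Lemma is_series_law_at t j : 0 <= t -> is_series (fun i => tau i * P t i j) (law_at tau P t j).
Proof.
  intros Ht. destruct tau_prob as [tau_ge0 tau_sum]. apply Series_correct.
  apply ex_series_le_nonneg with tau; [|eexists; exact tau_sum].
  intros i. pose proof (tau_ge0 i). pose proof (P_bounds lam mu P P_tf t i j Ht). split; nra.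
Qed.

Lemma law_at_ge0 t j : 0 <= t -> 0 <= law_at tau P t j.
Proof.
  intros Ht. destruct tau_prob as [tau_ge0 _].
  apply (series_ge0 _ _ (fun i => Rmult_le_pos _ _ (tau_ge0 i) (proj1 (P_bounds lam mu P P_tf t i j Ht)))).
  apply is_series_law_at; auto.
Qed.

Lemma is_series_law_cdf t x : 0 <= t ->
  is_series (fun i => tau i * row_cdf P t i x) (sum_lt (law_at tau P t) (S x)).
Proof.
  intros Ht. eapply is_series_ext;
    [|apply (is_series_sum_lt_family (fun j i => tau i * P t i j)); intros; apply is_series_law_at; auto].
  intros i. unfold row_cdf. rewrite sum_lt_scal. reflexivity.
Qed.

Lemma sum_lt_law_le1 t x : 0 <= t -> sum_lt (law_at tau P t) (S x) <= 1.
Proof.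
  intros Ht. destruct tau_prob as [tau_ge0 tau_sum].
  apply (series_le_of_sum_lt_le _ _ _ (is_series_law_cdf t x Ht)). intros n.
  apply Rle_trans with (sum_lt tau n); [|exact (sum_lt_le_series _ _ tau_ge0 tau_sum n)].
  apply sum_lt_le. intros i _. pose proof (row_cdf_bounds lam mu P P_tf t i x Ht).
  pose proof (tau_ge0 i). nra.
Qed.

Lemma is_series_tau_tail k :
  is_series (fun i => tau i * (if (k <? i)%nat then 1 else 0)) (1 - sum_lt tau (S k)).
Proof.
  destruct tau_prob as [_ tau_sum].
  eapply is_series_ext; [|exact (is_series_minus _ _ _ _ tau_sum (is_series_truncated tau (S k)))].
  intros n. unfold minus, plus, opp; simpl.
  destruct (Nat.ltb_spec k n), (Nat.ltb_spec n (S k)); try lia; ring.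
Qed.

Lemma sum_lt_law_at t x : 0 <= t ->
  sum_lt (law_at tau P t) (S x) =
  row_cdf P t 0 x - sum_lt (fun k => kernel lam mu t k x * (1 - sum_lt tau (S k))) (S x).
Proof.
  intros Ht. rewrite <- (is_series_unique _ _ (is_series_law_cdf t x Ht)).
  assert (H := is_series_minus _ _ _ _
    (is_series_scal_r (row_cdf P t 0 x) _ _ (proj2 tau_prob))
    (is_series_sum_lt_family (fun k i => kernel lam mu t k x * (tau i * (if (k <? i)%nat then 1 else 0)))
       _ (S x) (fun k => is_series_scal _ _ _ (is_series_tau_tail k)))).
  apply is_series_unique in H. etransitivity; [|etransitivity; [exact H|]].
  - apply Series_ext. intros i.
    change (plus ?a (opp ?b)) with (a - b).
    R_eq.
    rewrite (row_cdf_eq lam mu P lam_gt0 mu_gt0 P_tf t i x Ht),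
      (sum_lt_truncate _ i (S x)) by (intros; apply kernel_lt; lia).
    rewrite (sum_lt_ext (fun k => kernel lam mu t k x * (tau i * (if (k <? i)%nat then 1 else 0)))
               (fun k => tau i * (if (k <? i)%nat then kernel lam mu t k x else 0))).
    + rewrite sum_lt_scal. ring.
    + intros k _. destruct (Nat.ltb_spec k i); ring.
  - unfold minus, plus, opp, scal; simpl; unfold mult; simpl. ring.
Qed.

Lemma cdf_gap_eq t x : 0 <= t ->
  sum_lt (fun j => law_at tau P t j - pistar (lam / mu) j) (S x) =
  sum_lt (fun k => kernel lam mu t k x * (sum_lt tau (S k) - sum_lt (pistar (lam / mu)) (S k))) (S x).
Proof.
  intros Ht. assert (Hth : 0 <= lam / mu) by (apply Rlt_le, Rdiv_lt_0_compat; auto).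
  rewrite sum_lt_minus, (sum_lt_law_at t x Ht), (row_cdf_0_eq lam mu P lam_gt0 mu_gt0 P_tf t x Ht),
    (sum_lt_pistar _ x Hth).
  rewrite (sum_lt_ext (fun k => kernel lam mu t k x * (sum_lt tau (S k) - sum_lt (pistar (lam / mu)) (S k)))
    (fun k => pistar_tail (lam / mu) k * kernel lam mu t k x
                                  - kernel lam mu t k x * (1 - sum_lt tau (S k)))).
  - rewrite sum_lt_minus. ring.
  - intros k _. rewrite sum_lt_pistar by auto. ring.
Qed.

End InitialLaw.

Definition pow_diff (m : nat) (y : R) : R := (y + 1) ^ m - y ^ m.

Lemma pow_diff_S m y : pow_diff (S m) y = (y + 1) * pow_diff m y + y ^ m.
Proof. unfold pow_diff. simpl. ring. Qed.

Lemma pow_diff_ge0 m y : 0 <= y -> 0 <= pow_diff m y.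
Proof.
  intros Hy. induction m; [unfold pow_diff; simpl; lra|].
  rewrite pow_diff_S. pose proof (pow_le y m Hy). nra.
Qed.

Lemma pow_diff_mono m y z : 0 <= y <= z -> pow_diff m y <= pow_diff m z.
Proof.
  intros Hyz. induction m; [unfold pow_diff; simpl; lra|].
  rewrite !pow_diff_S. pose proof (pow_incr y z m Hyz).
  pose proof (pow_diff_ge0 m y ltac:(lra)).
  assert ((y + 1) * pow_diff m y <= (z + 1) * pow_diff m z) by (apply Rmult_le_compat; lra).
  lra.
Qed.

Lemma pow_pred_le_pow_diff m y : (1 <= m)%nat -> 0 <= y -> y ^ (m - 1) <= pow_diff m y.
Proof.
  intros Hm Hy. destruct m; [lia|]. rewrite pow_diff_S. replace (S m - 1)%nat with m by lia.
  pose proof (pow_diff_ge0 m y Hy). nra.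
Qed.

Lemma ex_series_pow_diff m th k : 0 <= th ->
  ex_series (fun n => pow_diff m (INR k + INR n) * exp_term th n).
Proof.
  intros Hth. pose proof (pos_INR k).
  apply ex_series_le_nonneg with (fun n => (INR k + 1 + INR n) ^ m * exp_term th n);
    [|apply ex_series_pow_exp_term; lra].
  intros n. pose proof (pos_INR n). pose proof (exp_term_ge0 th n Hth).
  pose proof (pow_diff_ge0 m (INR k + INR n) ltac:(lra)).
  pose proof (pow_le (INR k + INR n) m ltac:(lra)).
  split; [apply Rmult_le_pos; lra|]. apply Rmult_le_compat_r; auto.
  unfold pow_diff. replace (INR k + 1 + INR n) with (INR k + INR n + 1) by ring. lra.
Qed.

Definition mean_pow_diff (m : nat) (th : R) (k : nat) : R :=
  exp (- th) * Series (fun n => pow_diff m (INR k + INR n) * exp_term th n).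

Lemma is_series_h m th y : 0 <= y -> 0 <= th ->
  is_series (fun rho => exp (- th) * th ^ rho / INR (fact rho) * (y + INR rho) ^ (m - 1)) (h m th y).
Proof.
  intros Hy Hth. apply Series_correct.
  eapply ex_series_ext; [|apply (@ex_series_scal R_AbsRing R_CompleteNormedModule (exp (- th))),
                           (ex_series_pow_exp_term y (m - 1) th); auto].
  intros n. unfold scal; simpl; unfold mult, exp_term; simpl. unfold Rdiv; ring.
Qed.

Lemma h_term_ge0 m th y rho : 0 <= y -> 0 <= th ->
  0 <= exp (- th) * th ^ rho / INR (fact rho) * (y + INR rho) ^ (m - 1).
Proof.
  intros Hy Hth. pose proof (exp_pos (- th)). pose proof (pos_INR rho).
  apply Rmult_le_pos; [|apply pow_le; lra].
  apply Rdiv_le_0_compat; [apply Rmult_le_pos; [lra | apply pow_le; auto] | apply INR_fact_pos].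
Qed.

Lemma h_ge0 m th y : 0 <= y -> 0 <= th -> 0 <= h m th y.
Proof.
  intros Hy Hth. exact (series_ge0 _ _ (fun rho => h_term_ge0 m th y rho Hy Hth) (is_series_h m th y Hy Hth)).
Qed.

Lemma is_RInt_sum_lt (F : nat -> R -> R) (I : nat -> R) a b n :
  (forall k, is_RInt (F k) a b (I k)) ->
  is_RInt (fun y => sum_lt (fun k => F k y) n) a b (sum_lt I n).
Proof.
  intros HF. induction n; simpl.
  - assert (H := is_RInt_const a b 0).
    unfold scal in H; simpl in H; unfold mult in H; simpl in H. rewrite Rmult_0_r in H. exact H.
  - exact (is_RInt_plus _ _ _ _ _ _ IHn (HF n)).
Qed.

Lemma is_RInt_h_term m th k rho : (1 <= m)%nat ->
  is_RInt (fun y => exp (- th) * th ^ rho / INR (fact rho) * (y + INR rho) ^ (m - 1))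
    (INR k) (INR k + 1) (exp (- th) * exp_term th rho * pow_diff m (INR k + INR rho) / INR m).
Proof.
  intros Hm. pose proof (lt_0_INR m ltac:(lia)). pose proof (INR_fact_pos rho).
  set (F := fun y => exp (- th) * th ^ rho / INR (fact rho) * (y + INR rho) ^ m / INR m).
  replace (exp (- th) * exp_term th rho * pow_diff m (INR k + INR rho) / INR m)
    with (minus (F (INR k + 1)) (F (INR k))).
  - apply (is_RInt_derive F
      (fun y => exp (- th) * th ^ rho / INR (fact rho) * (y + INR rho) ^ (m - 1))).
    + intros y _. unfold F. auto_derive; auto.
      replace (pred m) with (m - 1)%nat by lia. field. lra.
    + intros y _. apply (ex_derive_continuous (fun y => _ * (y + INR rho) ^ (m - 1))).
      auto_derive; auto.
  - unfold F, minus, plus, opp, pow_diff, exp_term; simpl.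
    replace (INR k + 1 + INR rho) with (INR k + INR rho + 1) by ring. field. lra.
Qed.

Lemma cdf_unit_interval f k y : INR k < y < INR k + 1 -> cdf f y = sum_lt f (S k).
Proof.
  intros Hy. unfold cdf. apply is_series_unique.
  eapply is_series_ext; [|apply is_series_truncated].
  intros n. simpl. destruct (Nat.ltb_spec n (S k)), (Rle_dec (INR n) y) as [Hn|Hn]; auto.
  - exfalso. apply Hn. assert (INR n <= INR k) by (apply le_INR; lia). lra.
  - exfalso. assert (INR (S k) <= INR n) by (apply le_INR; lia). rewrite S_INR in *. lra.
Qed.

(* On [k, k+1] the integrand of K_h equals |T(k) - Pi*(k)| h_m, and h_m integrates
   there to mean_pow_diff / m. *)
Lemma cdf_gap_mean_pow_diff_le m th (tau pis : nat -> R) k : (1 <= m)%nat -> 0 <= th ->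
  ex_RInt (fun y => h m th y * Rabs (cdf tau y - cdf pis y)) (INR k) (INR k + 1) ->
  Rabs (sum_lt tau (S k) - sum_lt pis (S k)) * mean_pow_diff m th k
  <= INR m * RInt (fun y => h m th y * Rabs (cdf tau y - cdf pis y)) (INR k) (INR k + 1).
Proof.
  intros Hm Hth Hint. set (D := Rabs (sum_lt tau (S k) - sum_lt pis (S k))).
  assert (HD : 0 <= D) by apply Rabs_pos.
  pose proof (lt_0_INR m ltac:(lia)) as Hm0. pose proof (pos_INR k).
  set (w := fun rho => exp (- th) * exp_term th rho * pow_diff m (INR k + INR rho)).
  assert (Hw : is_series (fun rho => D * w rho) (D * mean_pow_diff m th k)).
  { apply (is_series_ext (fun n => D * (exp (- th) * (pow_diff m (INR k + INR n) * exp_term th n)))).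
    - intros n. unfold w. R_eq. ring.
    - exact (is_series_scal_l D _ _ (is_series_scal_l (exp (- th)) _ _
               (Series_correct _ (ex_series_pow_diff m th k Hth)))). }
  apply (series_le_of_sum_lt_le _ _ _ Hw). intros N. rewrite sum_lt_scal.
  set (hN := fun y => sum_lt (fun rho => exp (- th) * th ^ rho / INR (fact rho) * (y + INR rho) ^ (m - 1)) N).
  assert (HN : is_RInt (fun y => D * hN y) (INR k) (INR k + 1) (D * sum_lt (fun rho => w rho / INR m) N)).
  { exact (is_RInt_scal _ _ _ D _ (is_RInt_sum_lt _ _ _ _ N (fun rho => is_RInt_h_term m th k rho Hm))). }
  assert (Hle : RInt (fun y => D * hN y) (INR k) (INR k + 1)
                <= RInt (fun y => h m th y * Rabs (cdf tau y - cdf pis y)) (INR k) (INR k + 1)).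
  { apply RInt_le; [lra | eexists; exact HN | exact Hint|].
    intros y Hy. rewrite !(cdf_unit_interval _ k y Hy). fold D.
    rewrite Rmult_comm. apply Rmult_le_compat_r; auto.
    apply (sum_lt_le_series _ _ (fun rho => h_term_ge0 m th y rho ltac:(lra) Hth)).
    apply is_series_h; lra. }
  rewrite (is_RInt_unique _ _ _ _ HN) in Hle.
  replace (sum_lt (fun rho => w rho / INR m) N) with (/ INR m * sum_lt w N) in Hle.
  - apply (Rmult_le_compat_l (INR m)) in Hle; [|lra].
    replace (INR m * (D * (/ INR m * sum_lt w N))) with (D * sum_lt w N) in Hle by (field; lra).
    exact Hle.
  - rewrite <- sum_lt_scal. apply sum_lt_ext. intros; unfold Rdiv; ring.
Qed.

Section ImproperIntegral.
Variables (g : R -> R) (K : R).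
Hypothesis g_ge0 : forall y, 0 <= y -> 0 <= g y.
Hypothesis g_K : is_RInt_gen g (at_point 0) (Rbar_locally p_infty) K.

Lemma is_RInt_gen_approx eps : 0 < eps -> forall b, exists c, b <= c /\
  exists v, is_RInt g 0 c v /\ Rabs (v - K) < eps.
Proof.
  intros Heps b.
  destruct (g_K _ (locally_ball K (mkposreal eps Heps))) as [Q Rr HQ [M HM] Hall].
  exists (Rmax b M + 1). pose proof (Rmax_l b M). pose proof (Rmax_r b M). split; [lra|].
  exact (Hall 0 (Rmax b M + 1) HQ (HM (Rmax b M + 1) ltac:(lra))).
Qed.

Lemma ex_RInt_from0 b : 0 <= b -> ex_RInt g 0 b.
Proof.
  intros Hb. destruct (is_RInt_gen_approx 1 ltac:(lra) b) as [c [Hbc [v [Hv _]]]].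
  apply (ex_RInt_Chasles_1 g 0 b c); [lra | eexists; exact Hv].
Qed.

Lemma RInt_from0_le b : 0 <= b -> RInt g 0 b <= K.
Proof.
  intros Hb. destruct (Rle_dec (RInt g 0 b) K) as [|Hgt]; auto. exfalso.
  destruct (is_RInt_gen_approx (RInt g 0 b - K) ltac:(lra) b) as [c [Hbc [v [Hv Hvk]]]].
  assert (Hbc' : ex_RInt g b c) by (apply (ex_RInt_Chasles_2 g 0 b c); [lra | eexists; exact Hv]).
  assert (HC := RInt_Chasles g 0 b c (ex_RInt_from0 b Hb) Hbc').
  rewrite (is_RInt_unique _ _ _ _ Hv) in HC.
  assert (0 <= RInt g b c) by (apply RInt_ge_0; auto; intros; apply g_ge0; lra).
  change (plus ?a ?b) with (a + b) in HC. apply Rabs_def2 in Hvk. lra.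
Qed.

Lemma RInt_from0_unit_intervals N :
  RInt g 0 (INR N) = sum_lt (fun k => RInt g (INR k) (INR k + 1)) N.
Proof.
  induction N; [apply (RInt_point 0 g)|].
  simpl sum_lt. rewrite <- IHN, S_INR. pose proof (pos_INR N).
  pose proof (ex_RInt_from0 (INR N + 1) ltac:(lra)).
  rewrite <- (RInt_Chasles g 0 (INR N) (INR N + 1)); [reflexivity| |].
  - apply (ex_RInt_Chasles_1 g 0 (INR N) (INR N + 1)); auto; lra.
  - apply (ex_RInt_Chasles_2 g 0 (INR N) (INR N + 1)); auto; lra.
Qed.

End ImproperIntegral.

Lemma harmonic_block_ge n j : (1 <= n)%nat ->
  INR j / 2 <= sum_lt (fun x => if (n <=? x)%nat then / INR x else 0) (2 ^ j * n).
Proof.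
  intros Hn. induction j.
  - simpl. apply Rle_trans with 0; [lra|]. apply sum_lt_nonneg. intros i _.
    destruct (Nat.leb_spec n i); [left; apply Rinv_0_lt_compat, lt_0_INR; lia | lra].
  - replace (2 ^ S j * n)%nat with (2 ^ j * n + 2 ^ j * n)%nat by (simpl; lia).
    rewrite sum_lt_add. set (p := (2 ^ j * n)%nat) in *.
    assert (Hp : (n <= p)%nat) by (unfold p; pose proof (Nat.pow_nonzero 2 j ltac:(lia)); nia).
    assert (Hp0 : 0 < INR p) by (apply lt_0_INR; lia).
    assert (H : sum_lt (fun _ => / (2 * INR p)) p
                <= sum_lt (fun i => if (n <=? p + i)%nat then / INR (p + i) else 0) p).
    { apply sum_lt_le. intros i Hi. destruct (Nat.leb_spec n (p + i)); [|lia].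
      apply Rinv_le_contravar; [apply lt_0_INR; lia|].
      rewrite plus_INR. assert (INR i <= INR p) by (apply le_INR; lia). lra. }
    rewrite sum_lt_const in H. replace (INR p * / (2 * INR p)) with (/ 2) in H by (field; lra).
    rewrite S_INR. lra.
Qed.

(* Otherwise a x >= eps / x eventually, and the harmonic series diverges. *)
Lemma summable_small_index_mul (a : nat -> R) B : (forall x, 0 <= a x) ->
  (forall N, sum_lt a N <= B) ->
  forall eps N0, 0 < eps -> exists x, (N0 <= x)%nat /\ INR x * a x < eps.
Proof.
  intros Ha HB eps N0 Heps. apply NNPP. intros Hno.
  set (n := Nat.max N0 1).
  assert (Hlow : forall x, (n <= x)%nat -> eps * / INR x <= a x).
  { intros x Hx. assert (Hx0 : 0 < INR x) by (apply lt_0_INR; lia).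
    assert (eps <= INR x * a x) by (apply Rnot_lt_le; intros Hlt; apply Hno; exists x; split; [lia | auto]).
    apply (Rmult_le_reg_l (INR x)); auto.
    replace (INR x * (eps * / INR x)) with eps by (field; lra). auto. }
  destruct (INR_unbounded (2 * B / eps)) as [j Hj].
  pose proof (harmonic_block_ge n j ltac:(lia)).
  assert (eps * sum_lt (fun x => if (n <=? x)%nat then / INR x else 0) (2 ^ j * n)
          <= sum_lt a (2 ^ j * n)).
  { rewrite <- sum_lt_scal. apply sum_lt_le. intros x _.
    destruct (Nat.leb_spec n x); [apply Hlow; auto | rewrite Rmult_0_r; apply Ha]. }
  pose proof (HB (2 ^ j * n)%nat).
  assert (Hj' : 2 * B < eps * INR j).
  { apply (Rmult_lt_compat_l eps) in Hj; auto.
    replace (eps * (2 * B / eps)) with (2 * B) in Hj by (field; lra). lra. }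
  assert (eps * (INR j / 2) <= eps * sum_lt (fun x => if (n <=? x)%nat then / INR x else 0) (2 ^ j * n))
    by (apply Rmult_le_compat_l; lra).
  lra.
Qed.

Section MomentBound.
Variables (lam mu : R) (P : R -> nat -> nat -> R) (tau : nat -> R) (m : nat) (K t : R).
Hypothesis lam_gt0 : 0 < lam.
Hypothesis mu_gt0 : 0 < mu.
Hypothesis P_tf : is_transition_fn lam mu P.
Hypothesis tau_prob : is_prob tau.
Hypothesis m_ge1 : (1 <= m)%nat.
Hypothesis t_ge0 : 0 <= t.
Hypothesis K_int :
  is_RInt_gen (fun x => h m (lam / mu) x * Rabs (cdf tau x - cdf (pistar (lam / mu)) x))
    (at_point 0) (Rbar_locally p_infty) K.

Local Notation th := (lam / mu).
Local Notation decay := (exp (- mu * t - lam / mu * (exp (- mu * t) + mu * t - 1))).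
Local Notation init_gap k := (sum_lt tau (S k) - sum_lt (pistar (lam / mu)) (S k)).

Lemma th_ge0 : 0 <= th.
Proof. apply Rlt_le, Rdiv_lt_0_compat; auto. Qed.

Lemma decay_eq : decay = exp (- (mu + lam) * t) * exp (poisson_mean lam mu t).
Proof. unfold poisson_mean. rewrite <- exp_plus. f_equal. field. lra. Qed.

Lemma kernel_shift_le k n :
  kernel lam mu t k (k + n) <= exp (- (mu + lam) * t) * exp_term (poisson_mean lam mu t) n.
Proof.
  unfold kernel. destruct (Nat.leb_spec k (k + n)); [|lia]. replace (k + n - k)%nat with n by lia.
  apply Rmult_le_compat_r; [apply exp_term_ge0, poisson_mean_bounds; auto|].
  apply exp_le_mono. pose proof (pos_INR k). assert (0 <= mu * INR k * t) by (repeat apply Rmult_le_pos; lra).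
  nra.
Qed.

Lemma sum_pow_diff_kernel_le k N :
  sum_lt (fun x => pow_diff m (INR x) * kernel lam mu t k x) N <= decay * mean_pow_diff m th k.
Proof.
  set (a := poisson_mean lam mu t). pose proof (poisson_mean_bounds lam mu lam_gt0 mu_gt0 t t_ge0) as Ha.
  set (G := fun n => pow_diff m (INR k + INR n)).
  assert (G_ge0 : forall n, 0 <= G n) by (intros n; apply pow_diff_ge0; pose proof (pos_INR k); pose proof (pos_INR n); lra).
  assert (G_mono : forall n, G n <= G (S n)).
  { intros n. apply pow_diff_mono. rewrite S_INR. pose proof (pos_INR k); pose proof (pos_INR n); lra. }
  assert (HGth := ex_series_pow_diff m th k th_ge0). fold G in HGth.
  assert (HGa := ex_series_poisson_le G a th Ha G_ge0 HGth).
  assert (Hterm_ge0 : forall x, 0 <= pow_diff m (INR x) * kernel lam mu t k x).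
  { intros x. apply Rmult_le_pos; [apply pow_diff_ge0, pos_INR | apply kernel_bounds; auto]. }
  eapply Rle_trans; [apply (sum_lt_le_longer _ N (k + N)); auto; lia|].
  rewrite sum_lt_add, sum_lt_eq0, Rplus_0_l by (intros; rewrite kernel_lt by lia; ring).
  apply Rle_trans with (exp (- (mu + lam) * t) * sum_lt (fun n => G n * exp_term a n) N).
  { rewrite <- sum_lt_scal. apply sum_lt_le. intros n _. unfold G. rewrite plus_INR.
    rewrite (Rmult_comm (exp _)), Rmult_assoc. apply Rmult_le_compat_l; [apply G_ge0|].
    rewrite Rmult_comm. apply kernel_shift_le. }
  pose proof (exp_pos (- (mu + lam) * t)). pose proof (exp_pos a).
  apply Rle_trans with (exp (- (mu + lam) * t) * Series (fun n => G n * exp_term a n)).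
  { apply Rmult_le_compat_l; [lra|]. apply sum_lt_le_series; [|apply Series_correct; auto].
    intros n. apply Rmult_le_pos; auto. apply exp_term_ge0, Ha. }
  pose proof (poisson_expectation_mono G a th Ha G_ge0 G_mono HGth) as Hmono.
  rewrite decay_eq, Rmult_assoc. fold a. apply Rmult_le_compat_l; [lra|].
  replace (Series (fun n => G n * exp_term a n))
    with (exp a * (exp (- a) * Series (fun n => G n * exp_term a n)))
    by (rewrite <- Rmult_assoc, <- exp_plus, Rplus_opp_r, exp_0; ring).
  apply Rmult_le_compat_l; [lra | exact Hmono].
Qed.

Lemma K_integrand_ge0 y : 0 <= y ->
  0 <= h m th y * Rabs (cdf tau y - cdf (pistar th) y).
Proof. intros Hy. apply Rmult_le_pos; [apply h_ge0; auto; apply th_ge0 | apply Rabs_pos]. Qed.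

Lemma sum_pow_diff_kernel_gap_le N :
  sum_lt (fun x => pow_diff m (INR x) *
                   Rabs (sum_lt (fun k => kernel lam mu t k x * init_gap k) (S x))) N
  <= INR m * K * decay.
Proof.
  set (g := fun y => h m th y * Rabs (cdf tau y - cdf (pistar th) y)).
  apply Rle_trans with
    (sum_lt (fun x => sum_lt (fun k => Rabs (init_gap k) * (pow_diff m (INR x) * kernel lam mu t k x)) N) N).
  { apply sum_lt_le. intros x Hx. pose proof (pow_diff_ge0 m (INR x) (pos_INR x)).
    eapply Rle_trans; [apply Rmult_le_compat_l; [auto | apply sum_lt_abs]|].
    rewrite <- sum_lt_scal.
    rewrite (sum_lt_vanishing_tail _ (S x) N) by (lia || (intros; rewrite kernel_lt by lia; ring)).
    apply sum_lt_le. intros k _.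
    rewrite Rabs_mult, (Rabs_pos_eq (kernel _ _ _ _ _)) by (apply kernel_bounds; auto).
    right; ring. }
  rewrite sum_lt_swap.
  apply Rle_trans with (sum_lt (fun k => decay * (INR m * RInt g (INR k) (INR k + 1))) N).
  { apply sum_lt_le. intros k _. rewrite sum_lt_scal.
    apply Rle_trans with (Rabs (init_gap k) * (decay * mean_pow_diff m th k)).
    { apply Rmult_le_compat_l; [apply Rabs_pos | apply sum_pow_diff_kernel_le]. }
    rewrite Rmult_comm, Rmult_assoc. apply Rmult_le_compat_l; [left; apply exp_pos|].
    rewrite Rmult_comm. apply cdf_gap_mean_pow_diff_le; auto; [apply th_ge0|].
    pose proof (pos_INR k). apply (ex_RInt_Chasles_2 g 0 (INR k) (INR k + 1)); [lra|].
    apply (ex_RInt_from0 g K K_int); lra. }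
  rewrite !sum_lt_scal, <- (RInt_from0_unit_intervals g K K_int).
  pose proof (RInt_from0_le g K K_integrand_ge0 K_int (INR N) (pos_INR N)).
  pose proof (exp_pos (- mu * t - th * (exp (- mu * t) + mu * t - 1))). pose proof (pos_INR m).
  rewrite (Rmult_comm _ decay). apply Rmult_le_compat_l; [lra|]. apply Rmult_le_compat_l; lra.
Qed.

Local Notation cdf_gap x := (sum_lt (fun j => law_at tau P t j - pistar (lam / mu) j) (S x)).

Lemma sum_pow_diff_cdf_gap_le N :
  sum_lt (fun x => pow_diff m (INR x) * Rabs (cdf_gap x)) N <= INR m * K * decay.
Proof.
  eapply Rle_trans; [|apply (sum_pow_diff_kernel_gap_le N)]. right.
  apply sum_lt_ext. intros x _. rewrite (cdf_gap_eq lam mu P tau); auto.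
Qed.

Lemma moment_gap_by_parts N :
  sum_lt (fun j => INR j ^ m * (law_at tau P t j - pistar th j)) (S N)
  = INR N ^ m * cdf_gap N - sum_lt (fun x => pow_diff m (INR x) * cdf_gap x) N.
Proof.
  rewrite sum_lt_by_parts. f_equal. apply sum_lt_ext. intros x _.
  unfold pow_diff. rewrite S_INR. reflexivity.
Qed.

Lemma cdf_gap_le_tail N : cdf_gap N <= pistar_tail th N.
Proof.
  rewrite sum_lt_minus, (sum_lt_pistar _ _ th_ge0).
  pose proof (sum_lt_law_le1 lam mu P tau P_tf tau_prob t N t_ge0). lra.
Qed.

Lemma ex_series_pow_exp_term_th : ex_series (fun n => INR n ^ m * exp_term th n).
Proof.
  apply (ex_series_ext (fun n => (0 + INR n) ^ m * exp_term th n)).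
  - intros n. rewrite Rplus_0_l. reflexivity.
  - apply ex_series_pow_exp_term; [lra | apply th_ge0].
Qed.

Lemma ex_series_moment_pistar : ex_series (fun j => INR j ^ m * pistar th j).
Proof.
  apply ex_series_le_nonneg with (fun n => INR n ^ m * exp_term th n);
    [|apply ex_series_pow_exp_term_th].
  intros n. pose proof (pistar_bounds th n th_ge0). pose proof (pow_le (INR n) m (pos_INR n)).
  split; [apply Rmult_le_pos|apply Rmult_le_compat_l]; lra.
Qed.

Lemma ex_series_moment_law : ex_series (fun j => INR j ^ m * law_at tau P t j).
Proof.
  set (u := fun N => sum_lt (fun j => INR j ^ m * law_at tau P t j) N).
  assert (Hterm : forall j, 0 <= INR j ^ m * law_at tau P t j).
  { intros j. apply Rmult_le_pos; [apply pow_le, pos_INR | apply (law_at_ge0 lam mu P tau); auto]. }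
  set (M1 := Series (fun n => INR n ^ m * exp_term th n)).
  set (SP := Series (fun j => INR j ^ m * pistar th j)).
  assert (Hu : forall N, u (S N) <= th * M1 + INR m * K * decay + SP).
  { intros N. unfold u.
    rewrite (sum_lt_ext _ (fun j => INR j ^ m * (law_at tau P t j - pistar th j) + INR j ^ m * pistar th j))
      by (intros; ring).
    rewrite sum_lt_plus, moment_gap_by_parts.
    assert (Hlead : INR N ^ m * cdf_gap N <= th * M1).
    { pose proof (pow_le (INR N) m (pos_INR N)). pose proof (pistar_tail_bounds th N th_ge0).
      apply Rle_trans with (INR N ^ m * (th * exp_term th N)).
      { apply Rmult_le_compat_l; [lra|]. eapply Rle_trans; [apply cdf_gap_le_tail | lra]. }
      replace (INR N ^ m * (th * exp_term th N)) with (th * (INR N ^ m * exp_term th N)) by ring.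
      apply Rmult_le_compat_l; [apply th_ge0|].
      apply (term_le_series (fun n => INR n ^ m * exp_term th n)); [|apply Series_correct, ex_series_pow_exp_term_th].
      intros n. apply Rmult_le_pos; [apply pow_le, pos_INR | apply exp_term_ge0, th_ge0]. }
    assert (Hsum : - sum_lt (fun x => pow_diff m (INR x) * cdf_gap x) N <= INR m * K * decay).
    { eapply Rle_trans; [apply Rle_abs|]. rewrite Rabs_Ropp.
      eapply Rle_trans; [apply sum_lt_abs | eapply Rle_trans; [|apply (sum_pow_diff_cdf_gap_le N)]].
      right. apply sum_lt_ext. intros x _. rewrite Rabs_mult, Rabs_pos_eq; [reflexivity|].
      apply pow_diff_ge0, pos_INR. }
    assert (Hpi : sum_lt (fun j => INR j ^ m * pistar th j) (S N) <= SP).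
    { apply sum_lt_le_series; [|apply Series_correct, ex_series_moment_pistar].
      intros j. apply Rmult_le_pos; [apply pow_le, pos_INR | apply pistar_bounds, th_ge0]. }
    lra. }
  destruct (ex_finite_lim_seq_incr u (th * M1 + INR m * K * decay + SP)) as [l Hl].
  - intros N. unfold u. simpl sum_lt. pose proof (Hterm N). lra.
  - intros [|N]; [|apply Hu]. eapply Rle_trans; [|apply (Hu 0%nat)].
    pose proof (Hterm 0%nat). unfold u; simpl sum_lt. simpl in *. lra.
  - exists l. apply is_series_sum_lt. exact Hl.
Qed.

Lemma leading_term_le x :
  Rabs (INR x ^ m * cdf_gap x) <= INR x * (pow_diff m (INR x) * Rabs (cdf_gap x)).
Proof.
  replace (INR x ^ m) with (INR x * INR x ^ (m - 1))
    by (rewrite tech_pow_Rmult; f_equal; lia).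
  pose proof (pos_INR x). pose proof (pow_pred_le_pow_diff m (INR x) m_ge1 H).
  pose proof (pow_le (INR x) (m - 1) H). pose proof (Rabs_pos (cdf_gap x)).
  rewrite Rabs_mult, Rabs_mult, !Rabs_pos_eq by lra.
  rewrite Rmult_assoc. apply Rmult_le_compat_l; auto. apply Rmult_le_compat_r; auto.
Qed.

(* The boundary term of the summation by parts is not known to vanish, but it is
   small along a subsequence, which suffices. *)
Lemma moment_gap_bound :
  exists v : R, is_series (fun j => INR j ^ m * (law_at tau P t j - pistar th j)) v /\
    Rabs v <= INR m * K * decay.
Proof.
  destruct ex_series_moment_law as [l Hl]. destruct ex_series_moment_pistar as [SP HSP].
  exists (l - SP). split.
  { eapply is_series_ext; [|exact (is_series_minus _ _ _ _ Hl HSP)].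
    intros n. unfold minus, plus, opp; simpl. R_eq. ring. }
  apply Rle_plus_epsilon. intros eps Heps.
  assert (Hlim : is_lim_seq (fun N => sum_lt (fun j => INR j ^ m * (law_at tau P t j - pistar th j)) (S N)) (l - SP)).
  { apply (is_lim_seq_incr_1 (fun N => sum_lt _ N)), is_series_sum_lt.
    eapply is_series_ext; [|exact (is_series_minus _ _ _ _ Hl HSP)].
    intros n. unfold minus, plus, opp; simpl. R_eq. ring. }
  apply is_lim_seq_spec in Hlim. destruct (Hlim (mkposreal (eps / 2) ltac:(lra))) as [N0 HN0].
  destruct (summable_small_index_mul (fun x => pow_diff m (INR x) * Rabs (cdf_gap x))
              (INR m * K * decay)) with (eps / 2) N0 as [x [Hx Hsmall]]; [| |lra|].
  - intros x. apply Rmult_le_pos; [apply pow_diff_ge0, pos_INR | apply Rabs_pos].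
  - apply sum_pow_diff_cdf_gap_le.
  - specialize (HN0 x Hx). cbn [pos] in HN0. rewrite moment_gap_by_parts in HN0.
    pose proof (leading_term_le x).
    assert (HA : Rabs (sum_lt (fun x => pow_diff m (INR x) * cdf_gap x) x) <= INR m * K * decay).
    { eapply Rle_trans; [apply sum_lt_abs | eapply Rle_trans; [|apply (sum_pow_diff_cdf_gap_le x)]].
      right. apply sum_lt_ext. intros y _. rewrite Rabs_mult, (Rabs_pos_eq (pow_diff _ _)); [reflexivity|].
      apply pow_diff_ge0, pos_INR. }
    set (A := sum_lt (fun x => pow_diff m (INR x) * cdf_gap x) x) in *.
    set (L := INR x ^ m * cdf_gap x) in *.
    pose proof (Rabs_triang_inv (l - SP) (L - A)). rewrite Rabs_minus_sym in HN0.
    pose proof (Rabs_triang L (- A)). rewrite Rabs_Ropp in H1. unfold Rminus in *.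
    lra.
Qed.

End MomentBound.

Theorem mainTheorem6 (lam mu : R) (P : R -> nat -> nat -> R)
  (tau : nat -> R) (m : nat) (K t : R) :
  0 < lam -> 0 < mu ->
  is_transition_fn lam mu P ->
  is_prob tau ->
  (1 <= m)%nat ->
  ex_series (fun n => tau n * INR n ^ m) ->
  is_RInt_gen
    (fun x => h m (lam / mu) x * Rabs (cdf tau x - cdf (pistar (lam / mu)) x))
    (at_point 0) (Rbar_locally p_infty) K ->
  0 <= t ->
  exists v : R,
    is_series (fun j => INR j ^ m * (law_at tau P t j - pistar (lam / mu) j)) v /\
    Rabs v <= INR m * K *
      exp (- mu * t - (lam / mu) * (exp (- mu * t) + mu * t - 1)).
Proof.
  intros lam_gt0 mu_gt0 P_tf tau_prob m_ge1 _ K_int t_ge0.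
  exact (moment_gap_bound lam mu P tau m K t lam_gt0 mu_gt0 P_tf tau_prob m_ge1 t_ge0 K_int).
Qed.
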